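(* Let $T$ be a complete theory with monster model $\mathcal{U}$, $A\subseteq\mathcal{U}$ small, and $\mu\in\mathfrak{M}_x(\mathcal{U})$, $\nu\in\mathfrak{M}_y(\mathcal{U})$, $\eta\in\mathfrak{M}_z(\mathcal{U})$ (with $x,y,z$ pairwise disjoint). If $\mu\geq_{\mathbb{E},A}\nu$ and $\nu\geq_{\mathbb{E},A}\eta$, then $\mu\geq_{\mathbb{E},A}\eta$.
   Context: For $B\subseteq\mathcal{U}$, $\mathcal{L}_x(B)$ is the Boolean algebra of formulas in $x$ with parameters from $B$ modulo $T$, embedded in $\mathcal{L}_{xy}(B)$ via $\varphi(x)\mapsto\varphi(x)\wedge y=y$; $\mathfrak{M}_x(B)$ is the set of finitely additive probability measures on $\mathcal{L}_x(B)$. For $\omega\in\mathfrak{M}_{xy}(B)$, $\pi_x(\omega)(\varphi(x))=\omega(\varphi(x)\wedge y=y)$ (similarly $\pi_y$); $\omega|_C$ is restriction. For $\mu\in\mathfrak{M}_x(\mathcal{U})$, $\nu\in\mathfrak{M}_y(\mathcal{U})$: $\mu\geq_{\mathbb{E},A}\nu$ means there is $\lambda\in\mathfrak{M}_{xy}(A)$ with $\pi_x(\lambda)=\mu|_A$ such that every $\omega\in\mathfrak{M}_{xy}(\mathcal{U})$ with $\omega|_A=\lambda$ and $\pi_x(\omega)=\mu$ satisfies $\pi_y(\omega)=\nu$ (analogously for other pairs of variable tuples). *)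

From mathcomp Require Import all_boot.
From Stdlib Require Import Reals.

Set Implicit Arguments.
Unset Strict Implicit.
Unset Printing Implicit Defensive.

Record language := Language {
  fsym : Type; fari : fsym -> nat;
  rsym : Type; rari : rsym -> nat }.

Record structure (L : language) := Structure {
  carrier :> Type;
  ifun : forall f : fsym L, ('I_(fari f) -> carrier) -> carrier;
  irel : forall r : rsym L, ('I_(rari r) -> carrier) -> Prop }.

Section Syntax.
Variables (L : language) (M : Type).

Inductive term : Type :=
  | Var : nat -> term
  | Par : M -> term
  | App : forall f : fsym L, ('I_(fari f) -> term) -> term.

Inductive formula : Type :=
  | Eq : term -> term -> formula
  | Rel : forall r : rsym L, ('I_(rari r) -> term) -> formula
  | Bot : formula
  | Neg : formula -> formula
  | And : formula -> formula -> formula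
  | Ex : nat -> formula -> formula.

Definition Top : formula := Neg Bot.
Definition Or (p q : formula) : formula := Neg (And (Neg p) (Neg q)).

Fixpoint tfree (v : nat) (t : term) : Prop :=
  match t with
  | Var w => v = w
  | Par _ => False
  | App f a => exists i, tfree v (a i)
  end.

Fixpoint ffree (v : nat) (p : formula) : Prop :=
  match p with
  | Eq t1 t2 => tfree v t1 \/ tfree v t2
  | Rel r a => exists i, tfree v (a i)
  | Bot => False
  | Neg q => ffree v q
  | And q1 q2 => ffree v q1 \/ ffree v q2
  | Ex w q => v <> w /\ ffree v q
  end.

Fixpoint tpars (B : M -> Prop) (t : term) : Prop :=
  match t with
  | Var _ => True
  | Par m => B m
  | App f a => forall i, tpars B (a i)
  end.

Fixpoint fpars (B : M -> Prop) (p : formula) : Prop :=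
  match p with
  | Eq t1 t2 => tpars B t1 /\ tpars B t2
  | Rel r a => forall i, tpars B (a i)
  | Bot => True
  | Neg q => fpars B q
  | And q1 q2 => fpars B q1 /\ fpars B q2
  | Ex _ q => fpars B q
  end.

Definition alleq (Y : seq nat) : formula :=
  foldr (fun v acc => And (Eq (Var v) (Var v)) acc) Top Y.

End Syntax.

Fixpoint tmap (L : language) (M N : Type) (g : M -> N) (t : term L M) : term L N :=
  match t with
  | Var n => Var L N n
  | Par m => Par L (g m)
  | App f a => App (fun i => tmap g (a i))
  end.

Fixpoint fmap (L : language) (M N : Type) (g : M -> N) (p : formula L M) : formula L N :=
  match p with
  | Eq t1 t2 => Eq (tmap g t1) (tmap g t2)
  | Rel r a => Rel (fun i => tmap g (a i))
  | Bot => Bot L N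
  | Neg q => Neg (fmap g q)
  | And q1 q2 => And (fmap g q1) (fmap g q2)
  | Ex v q => Ex v (fmap g q)
  end.

Section Semantics.
Variables (L : language) (U : structure L).

Fixpoint teval (s : nat -> U) (t : term L U) : U :=
  match t with
  | Var n => s n
  | Par m => m
  | App f a => @ifun L U f (fun i => teval s (a i))
  end.

Fixpoint sat (s : nat -> U) (p : formula L U) : Prop :=
  match p with
  | Eq t1 t2 => teval s t1 = teval s t2
  | Rel r a => @irel L U r (fun i => teval s (a i))
  | Bot => False
  | Neg q => ~ sat s q
  | And q1 q2 => sat s q1 /\ sat s q2
  | Ex v q => exists m : U, sat (fun n => if n == v then m else s n) q
  end.

(* equivalence modulo T = Th(U) (with parameters: truth in U) *)
Definition fequiv (p q : formula L U) : Prop := forall s, sat s p <-> sat s q.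

(* p is (a representative of) an element of L_X(B) *)
Definition inL (X : seq nat) (B : U -> Prop) (p : formula L U) : Prop :=
  (forall v, ffree v p -> v \in X) /\ fpars B p.

Definition setT_U : U -> Prop := fun _ => True.

(* finitely additive probability measures on the Boolean algebra L_X(B):
   functions on formulas in L_X(B), invariant under equivalence mod T *)
Definition is_measure (X : seq nat) (B : U -> Prop) (m : formula L U -> R) : Prop :=
  (forall p q, inL X B p -> inL X B q -> fequiv p q -> m p = m q) /\
  (forall p, inL X B p -> (0 <= m p)%R) /\
  m (Top L U) = 1%R /\
  (forall p q, inL X B p -> inL X B q -> fequiv (And p q) (Bot L U) ->
     m (Or p q) = (m p + m q)%R).

Definition meq (X : seq nat) (B : U -> Prop) (m1 m2 : formula L U -> R) : Prop :=
  forall p, inL X B p -> m1 p = m2 p.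

(* marginal: pi_x(omega)(phi(x)) = omega(phi(x) /\ y = y),  here Y = y *)
Definition marg (m : formula L U -> R) (Y : seq nat) : formula L U -> R :=
  fun p => m (And p (alleq L U Y)).

Definition geqE (A : U -> Prop) (X : seq nat) (mu : formula L U -> R)
    (Y : seq nat) (nu : formula L U -> R) : Prop :=
  exists lam : formula L U -> R,
    is_measure (X ++ Y) A lam /\
    meq X A (marg lam Y) mu /\
    forall om : formula L U -> R,
      is_measure (X ++ Y) setT_U om ->
      meq (X ++ Y) A om lam ->
      meq X setT_U (marg om Y) mu ->
      meq Y setT_U (marg om X) nu.

Definition card_le (S T : Type) : Prop := exists f : S -> T, injective f.
Definition card_lt (S T : Type) : Prop := card_le S T /\ ~ card_le T S.

Definition small (K : Type) (B : U -> Prop) : Prop := card_lt {m : U | B m} K.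

(* |K|-saturation (for 1-types in variable 0; implies n-types) *)
Definition saturated (K : Type) : Prop :=
  forall B : U -> Prop, small K B ->
  forall P : formula L U -> Prop,
    (forall p, P p -> inL [:: 0] B p) ->
    (forall l : seq (formula L U), (forall p, List.In p l -> P p) ->
        exists s, forall p, List.In p l -> sat s p) ->
    exists m : U, forall p, P p -> sat (fun _ => m) p.

Definition automorphism (sg : U -> U) : Prop :=
  bijective sg /\
  (forall (f : fsym L) (a : 'I_(fari f) -> U), sg (@ifun L U f a) = @ifun L U f (fun i => sg (a i))) /\
  (forall (r : rsym L) (a : 'I_(rari r) -> U), @irel L U r a <-> @irel L U r (fun i => sg (a i))).

Definition elementary_on (B : U -> Prop) (g : U -> U) : Prop :=
  forall p : formula L U, fpars B p -> (forall v, ~ ffree v p) ->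
    forall s, sat s p <-> sat s (fmap g p).

Definition strongly_homogeneous (K : Type) : Prop :=
  forall (B : U -> Prop) (g : U -> U), small K B -> elementary_on B g ->
    exists sg, automorphism sg /\ forall m, B m -> sg m = g m.

(* U is a monster model of its (complete) theory T = Th(U), with monster
   cardinal |K| > |T| = |L| + aleph_0 *)
Definition monster (K : Type) : Prop :=
  inhabited U /\
  card_lt (nat + fsym L + rsym L)%type K /\
  saturated K /\ strongly_homogeneous K.

End Semantics.

From mathcomp Require Import all_boot.
From Stdlib Require Import Reals Lra FunctionalExtensionality ClassicalEpsilon Classical.
From mathcomp Require classical_sets.

Set Implicit Arguments.
Unset Strict Implicit.
Unset Printing Implicit Defensive.

(* Everything rests on amalgamating measures: if [m1] is a measure on the formulas in the
   variables [V1] over [P1], [m2] one on [V2] over [P2], [P1 <= P2], and they agree on the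
   formulas common to both, then some measure on all formulas extends both.  By a Hahn-Banach
   (Zorn) argument it suffices that [int f1 dm1 + int f2 dm2 <= sup (f1 + f2)] for step
   functions [f1], [f2] over the two algebras.  Partition according to the level sets of [f1];
   on the cell [e] where [f1] is largest both sides are compared through [exists (V1 \ V2), e],
   which lies in the common algebra, and induction removes that cell.

   For the theorem, amalgamate the witness [lam1] of [mu >= nu] with [mu]; the result [om1] has
   [y]-marginal [nu], so it amalgamates with the witness [lam2] of [nu >= eta] into [om2], whose
   restriction to [xz] over [A] is the new witness.  Given [om] extending it with [x]-marginal
   [mu], amalgamating [om2] with [om] yields a measure to which the two hypotheses apply in
   turn, forcing its [y]- and then its [z]-marginal. *)

Local Open Scope R_scope.

Section PositiveExtension.
Variable T : Type.

Definition bounded (g : T -> R) := exists M, forall x, Rabs (g x) <= M.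

Lemma bounded_add g h : bounded g -> bounded h -> bounded (fun x => g x + h x).
Proof.
move=> [M HM] [N HN]; exists (M + N) => x.
by apply: Rle_trans (Rabs_triang _ _) _; have := HM x; have := HN x; lra.
Qed.

Lemma bounded_scale a g : bounded g -> bounded (fun x => a * g x).
Proof.
move=> [M HM]; exists (Rabs a * M) => x; rewrite Rabs_mult.
by apply: Rmult_le_compat_l; [exact: Rabs_pos | exact: HM].
Qed.

(* [H g r] reads "phi g = r" for a partial linear functional [phi] on bounded functions with
   [phi <= sup]; working with graphs makes extensions plain set inclusions. *)
Record positive_graph (H : (T -> R) -> R -> Prop) : Prop := PositiveGraph {
  graphD : forall g r h t, H g r -> H h t -> H (fun x => g x + h x) (r + t);
  graphZ : forall a g r, H g r -> H (fun x => a * g x) (a * r);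
  graph_bounded : forall g r, H g r -> bounded g;
  graph_le_sup : forall g r c, H g r -> (forall x, g x <= c) -> r <= c }.

Lemma positive_graph_ext H H' :
  (forall g r, H g r <-> H' g r) -> positive_graph H -> positive_graph H'.
Proof.
move=> E [HD HZ Hb Hle]; split.
- by move=> g r h t /E ? /E ?; apply/E; exact: HD.
- by move=> a g r /E ?; apply/E; exact: HZ.
- by move=> g r /E; exact: Hb.
- by move=> g r c /E; exact: Hle.
Qed.

Lemma positive_graph_of_pairs H :
  (forall g r h t, H g r -> H h t -> exists H', positive_graph H' /\
     (forall f u, H' f u -> H f u) /\ H' g r /\ H' h t) ->
  positive_graph H.
Proof.
move=> pairs; split.
- move=> g r h t Hg Hh; have [H' [[HD _ _ _] [sub [Hg' Hh']]]] := pairs _ _ _ _ Hg Hh.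
  exact/sub/HD.
- move=> a g r Hg; have [H' [[_ HZ _ _] [sub [Hg' _]]]] := pairs _ _ _ _ Hg Hg.
  exact/sub/HZ.
- move=> g r Hg; have [H' [[_ _ Hb _] [_ [Hg' _]]]] := pairs _ _ _ _ Hg Hg.
  exact: Hb Hg'.
- move=> g r c Hg; have [H' [[_ _ _ Hle] [_ [Hg' _]]]] := pairs _ _ _ _ Hg Hg.
  exact: Hle Hg'.
Qed.

Section OneStep.
Variable H : (T -> R) -> R -> Prop.
Hypothesis H_pos : positive_graph H.

Lemma graph_le_diff g r g' r' c :
  H g r -> H g' r' -> (forall x, g x - g' x <= c) -> r - r' <= c.
Proof.
move=> Hg Hg' le_c.
have := graph_le_sup H_pos (graphD H_pos Hg (graphZ H_pos (-1) Hg')) (c := c)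
  (fun x => ltac:(have := le_c x; lra)).
lra.
Qed.

Lemma graph_functional g r r' : H g r -> H g r' -> r = r'.
Proof.
move=> Hr Hr'.
have := graph_le_diff Hr Hr' (c := 0) (fun x => ltac:(lra)).
have := graph_le_diff Hr' Hr (c := 0) (fun x => ltac:(lra)).
lra.
Qed.

Lemma graph_ge_inf g r c : H g r -> (forall x, c <= g x) -> c <= r.
Proof.
move=> Hg c_le.
have := graph_le_sup H_pos (graphZ H_pos (-1) Hg) (c := - c)
  (fun x => ltac:(have := c_le x; lra)).
lra.
Qed.

Lemma graph0 g r : H g r -> H (fun _ => 0) 0.
Proof.
move=> /(graphZ H_pos 0); rewrite Rmult_0_l.
by have -> : (fun x => 0 * g x) = (fun _ => 0) by apply: functional_extensionality => x; lra.
Qed.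

Variable h : T -> R.
Hypothesis h_bounded : bounded h.

(* The values of [phi h] compatible with [phi <= sup] on the functions [g - h] and [g + h]. *)
Definition extension_value (t : R) :=
  (forall g r c, H g r -> (forall x, g x - h x <= c) -> r - c <= t) /\
  (forall g r c, H g r -> (forall x, g x + h x <= c) -> t <= c - r).

Lemma exists_extension_value : H (fun _ => 0) 0 -> exists t, extension_value t.
Proof.
move=> H0; have [N HN] := h_bounded.
pose S u := exists g r c, H g r /\ (forall x, g x - h x <= c) /\ u = r - c.
have S_le u g' r' c' : S u -> H g' r' -> (forall x, g' x + h x <= c') -> u <= c' - r'.
  move=> [g [r [c [Hg [le_c ->]]]]] Hg' le_c'.
  have := graph_le_sup H_pos (graphD H_pos Hg Hg') (c := c + c')
    (fun x => ltac:(have := le_c x; have := le_c' x; lra)).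
  lra.
have [t [t_ub t_lub]] : {t | is_lub S t}.
  apply: completeness.
    exists (N - 0) => u Su; apply: S_le Su H0 _ => x.
    by have := HN x; have := Rle_abs (h x); lra.
  exists (0 - N), (fun _ => 0), 0, N; split=> //; split=> // x.
  by have := HN x; have := Rabs_Ropp (h x); have := Rle_abs (- h x); lra.
exists t; split.
- by move=> g r c Hg le_c; apply: t_ub; exists g, r, c.
- by move=> g r c Hg le_c; apply: t_lub => u Su; exact: S_le Su Hg le_c.
Qed.

Definition graph_span (t : R) (f : T -> R) (u : R) :=
  exists g r a, H g r /\ f = (fun x => g x + a * h x) /\ u = r + a * t.

Lemma graph_span_le_sup t g r a c :
  extension_value t -> H g r -> (forall x, g x + a * h x <= c) -> r + a * t <= c.
Proof.
move=> [t_ge t_le] Hg le_c.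
have scaled b : 0 < b -> forall x, b * g x + b * a * h x <= b * c.
  move=> b_gt0 x; rewrite Rmult_assoc -Rmult_plus_distr_l.
  exact/Rmult_le_compat_l/le_c/Rlt_le.
case: (Rtotal_order a 0) => [a_lt0|[a0|a_gt0]].
- have b_gt0 : 0 < / - a by apply: Rinv_0_lt_compat; lra.
  have ba : / - a * a = -1 by field; lra.
  have := t_ge _ _ (/ - a * c) (graphZ H_pos (/ - a) Hg)
    (fun x => ltac:(have := scaled _ b_gt0 x; rewrite ba; lra)).
  move=> /(Rmult_le_compat_l (- a) _ _ (ltac:(lra))).
  have -> : - a * (/ - a * r - / - a * c) = r - c by field; lra.
  lra.
- rewrite a0 in le_c *.
  have := graph_le_sup H_pos Hg (c := c) (fun x => ltac:(have := le_c x; lra)).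
  lra.
- have b_gt0 : 0 < / a by apply: Rinv_0_lt_compat.
  have ba : / a * a = 1 by field; lra.
  have := t_le _ _ (/ a * c) (graphZ H_pos (/ a) Hg)
    (fun x => ltac:(have := scaled _ b_gt0 x; rewrite ba; lra)).
  move=> /(Rmult_le_compat_l a _ _ (ltac:(lra))).
  have -> : a * (/ a * c - / a * r) = c - r by field; lra.
  lra.
Qed.

Lemma graph_span_positive t : extension_value t -> positive_graph (graph_span t).
Proof.
move=> t_ext; split.
- move=> _ _ _ _ [g [r [a [Hg [-> ->]]]]] [g' [r' [a' [Hg' [-> ->]]]]].
  exists (fun x => g x + g' x), (r + r'), (a + a'); split; first exact: graphD.
  by split; [apply: functional_extensionality => x|]; ring.
- move=> b _ _ [g [r [a [Hg [-> ->]]]]].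
  exists (fun x => b * g x), (b * r), (b * a); split; first exact: graphZ.
  by split; [apply: functional_extensionality => x|]; ring.
- move=> _ _ [g [r [a [Hg [-> _]]]]].
  exact/bounded_add/bounded_scale/h_bounded/(graph_bounded H_pos Hg).
- move=> _ _ c [g [r [a [Hg [-> ->]]]]]; exact: graph_span_le_sup.
Qed.

Lemma graph_sub_span t g r : H g r -> graph_span t g r.
Proof.
move=> Hg; exists g, r, 0; split=> //; split; last ring.
by apply: functional_extensionality => x; ring.
Qed.

Lemma graph_span_new t : H (fun _ => 0) 0 -> graph_span t h t.
Proof.
move=> H0; exists (fun _ => 0), 0, 1; split=> //; split; last ring.
by apply: functional_extensionality => x; ring.
Qed.

End OneStep.

Lemma positive_graph_chain G (F : classical_sets.set (classical_sets.set ((T -> R) * R))) :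
  positive_graph G ->
  (forall X, F X -> positive_graph (fun g r => X (g, r) \/ G g r)) ->
  classical_sets.total_on F classical_sets.subset ->
  positive_graph (fun g r => classical_sets.bigcup F (fun X => X) (g, r) \/ G g r).
Proof.
move=> G_pos FP F_chain; apply: positive_graph_of_pairs.
have via X g r h t : F X -> X (g, r) \/ G g r -> X (h, t) \/ G h t -> exists H',
    positive_graph H' /\
    (forall f u, H' f u -> classical_sets.bigcup F (fun X => X) (f, u) \/ G f u) /\
    H' g r /\ H' h t.
  move=> FX Hg Hh; exists (fun g r => X (g, r) \/ G g r); split; first exact: FP.
  by split=> // f u [Xf|Gf]; [left; exists X | right].
move=> g r h t [[X FX Xg]|Gg] [[Y FY Yh]|Gh].
- have [XY|YX] := F_chain X Y FX FY.
  + by apply: (via Y) => //; left => //; apply: XY.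
  + by apply: (via X) => //; left => //; apply: YX.
- by apply: (via X); [|left|right].
- by apply: (via Y); [|right|left].
- by exists G; split=> //; split=> // f u; right.
Qed.

Lemma positive_graph_total G : positive_graph G -> G (fun _ => 0) 0 ->
  exists H, positive_graph H /\ (forall g r, G g r -> H g r) /\
    (forall h, bounded h -> exists r, H h r).
Proof.
move=> G_pos G0.
(* Zorn on the sets [X] with [X \/ G] positive, so that the empty chain needs no care. *)
pose P (X : classical_sets.set ((T -> R) * R)) :=
  positive_graph (fun g r => X (g, r) \/ G g r).
have [A [PA A_max]] : exists A, P A /\ forall B, classical_sets.proper A B -> ~ P B.
  by apply: classical_sets.Zorn_bigcup => F; apply: positive_graph_chain.
pose H g r := A (g, r) \/ G g r.
have H0 : H (fun _ => 0) 0 by right.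
exists H; split=> //; split=> [g r|h h_bnd]; first by right.
apply: NNPP => no_value.
have [t t_ext] := exists_extension_value PA h_bnd H0.
apply: (A_max (fun e => graph_span H h t e.1 e.2)).
  split=> [[g r] Ag|A_span]; first by apply: graph_sub_span; left.
  by apply: no_value; exists t; left; apply: A_span; apply: graph_span_new.
apply: positive_graph_ext (graph_span_positive PA h_bnd t_ext) => g r.
by split=> [|[//|Gg]]; [left|apply: graph_sub_span; right].
Qed.

End PositiveExtension.

Lemma sub_catl (T : eqType) (s1 s2 : seq T) : {subset s1 <= s1 ++ s2}.
Proof. by move=> v; rewrite mem_cat => ->. Qed.

Lemma sub_catr (T : eqType) (s1 s2 : seq T) : {subset s2 <= s1 ++ s2}.
Proof. by move=> v; rewrite mem_cat => ->; rewrite orbT. Qed.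

Lemma sub_catl_catA (T : eqType) (s1 s2 s3 : seq T) : {subset s1 ++ s2 <= s1 ++ s2 ++ s3}.
Proof. by rewrite catA; apply: sub_catl. Qed.

Arguments sub_catl {T} s1 s2.
Arguments sub_catr {T} s1 s2.
Arguments sub_catl_catA {T} s1 s2 s3.

Section Formulas.
Variables (L : language) (U : structure L).
Local Notation form := (formula L U).

Lemma teval_coincide (t : term L U) (s s' : nat -> U) :
  (forall v, tfree v t -> s v = s' v) -> teval s t = teval s' t.
Proof.
elim: t => [n|m|f a IH] /= ss'; [exact: ss' | by [] |].
congr (ifun _); apply: functional_extensionality => i.
by apply: IH => v free_v; apply: ss'; exists i.
Qed.

Lemma sat_coincide (p : form) (s s' : nat -> U) :
  (forall v, ffree v p -> s v = s' v) -> sat s p <-> sat s' p.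
Proof.
elim: p s s' => [t1 t2|r a| |q IH|q1 IH1 q2 IH2|w q IH] s s' ss' /=.
- by rewrite (teval_coincide (s' := s')) ?(teval_coincide (t := t2) (s' := s')) // => v ?;
    apply: ss'; [right|left].
- have -> // : (fun i => teval s (a i)) = (fun i => teval s' (a i)).
  apply: functional_extensionality => i; apply: teval_coincide => v ?.
  by apply: ss'; exists i.
- by [].
- by rewrite (IH s s').
- by rewrite (IH1 s s') ?(IH2 s s') // => v ?; apply: ss'; [right|left].
- have E m : sat (fun n => if n == w then m else s n) q <->
             sat (fun n => if n == w then m else s' n) q.
    by apply: IH => v ?; case: eqP => // /eqP vw; apply: ss'; split=> //; apply/eqP.
  by split=> [[m /E]|[m /E]]; exists m.
Qed.

Definition Exs (W : seq nat) (p : form) : form := foldr (@Ex L U) p W.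

Lemma sat_Exs W p s :
  sat s (Exs W p) <-> exists s', (forall v, v \notin W -> s' v = s v) /\ sat s' p.
Proof.
elim: W s => [|w W IH] s /=.
  split=> [sp|[s' [ss' s'p]]]; first by exists s.
  by have -> : s = s' by apply: functional_extensionality => v; rewrite ss'.
split=> [[m /IH [s' [ss' s'p]]]|[s' [ss' s'p]]].
  exists s'; split=> // v; rewrite in_cons negb_or => /andP [/negbTE vw vW].
  by rewrite ss' // vw.
exists (s' w); apply/IH; exists s'; split=> // v vW.
by case: eqP => [->|/eqP vw] //; apply: ss'; rewrite in_cons negb_or vw.
Qed.

Lemma inL_sub X X' (B B' : U -> Prop) (p : form) :
  {subset X <= X'} -> (forall u, B u -> B' u) -> inL X B p -> inL X' B' p.
Proof.
move=> XX' BB' [freeX parsB]; split=> [v /freeX /XX' //|].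
have tpars_sub (t : term L U) : tpars B t -> tpars B' t.
  by elim: t => [n|m|f a IH] //=; [exact: BB' | move=> Ht i; exact: IH].
elim: p parsB {freeX} => /= [t1 t2 [? ?]|r a Ha| |q IH|q1 IH1 q2 IH2 [? ?]|v q IH] //.
- by split; apply: tpars_sub.
- by move=> i; apply: tpars_sub.
- by split; [apply: IH1|apply: IH2].
Qed.

Lemma inL_And X (B : U -> Prop) (p q : form) :
  inL X B p -> inL X B q -> inL X B (And p q).
Proof. by move=> [Hp1 Hp2] [Hq1 Hq2]; split=> //= v [/Hp1|/Hq1]. Qed.

Lemma inL_Neg X (B : U -> Prop) (p : form) : inL X B p -> inL X B (Neg p).
Proof. by []. Qed.

Lemma inL_Top X (B : U -> Prop) : inL X B (Top L U).
Proof. by []. Qed.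

Lemma inL_Exs X W (B : U -> Prop) (p : form) :
  inL X B p -> inL [seq v <- X | v \notin W] B (Exs W p).
Proof.
move=> [freeX parsB]; split; last by elim: W.
have free_Exs v : ffree v (Exs W p) -> v \notin W /\ ffree v p.
  elim: W => [|w W IH] /= => [pv|[vw /IH [vW pv]]]; first by split.
  by rewrite in_cons negb_or vW andbT; split=> //; apply/eqP.
by move=> v /free_Exs [vW /freeX vX]; rewrite mem_filter vW vX.
Qed.

Lemma inL_marg X Y (B : U -> Prop) (p : form) :
  inL X B p -> inL (X ++ Y) B (And p (alleq L U Y)).
Proof.
move=> [freeX parsB]; split=> /=; last by split=> //; elim: Y.
have free_alleq v : ffree v (alleq L U Y) -> v \in Y.
  by elim: Y => //= w Y IH [[vw|vw]|/IH vY]; rewrite in_cons ?vw ?eqxx ?vY ?orbT.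
by move=> v [/freeX|/free_alleq]; rewrite mem_cat => ->; rewrite ?orbT.
Qed.

Ltac solve_inL :=
  by repeat first [assumption | apply: inL_And | apply: inL_Neg | apply: inL_Top].

Section Measure.
Variables (X : seq nat) (B : U -> Prop) (m : form -> R).
Hypothesis m_meas : is_measure X B m.

Lemma measure_equiv p q : inL X B p -> inL X B q -> fequiv p q -> m p = m q.
Proof. by case: m_meas => E _; apply: E. Qed.

Lemma measure_ge0 p : inL X B p -> 0 <= m p.
Proof. by case: m_meas => _ [ge0 _]; apply: ge0. Qed.

Lemma measure_Top : m (Top L U) = 1.
Proof. by case: m_meas => _ [_ []]. Qed.

Lemma measure_Or p q : inL X B p -> inL X B q ->
  (forall s, ~ (sat s p /\ sat s q)) -> m (Or p q) = m p + m q.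
Proof.
case: m_meas => _ [_ [_ add]] Hp Hq disj; apply: add => // s.
by split=> // /disj.
Qed.

Lemma measure_unsat p : inL X B p -> (forall s, ~ sat s p) -> m p = 0.
Proof.
move=> Hp unsat.
have := measure_Or (inL_Top X B) Hp (fun s sp => unsat s (proj2 sp)).
rewrite (measure_equiv (q := Top L U)) ?measure_Top; [lra|solve_inL|solve_inL|].
by move=> s /=; have := unsat s; tauto.
Qed.

Lemma measure_split p q : inL X B p -> inL X B q ->
  m p = m (And p q) + m (And p (Neg q)).
Proof.
move=> Hp Hq; rewrite -measure_Or; try solve_inL; last by move=> s /= [[_ ?] [_ ?]].
by apply: measure_equiv; try solve_inL; move=> s /=; have := classic (sat s q); tauto.
Qed.

Lemma marg_eq Y Z p : {subset Y <= X} -> {subset Z <= X} -> inL Y B p ->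
  marg m Z p = m p.
Proof.
move=> YX ZX Hp; apply: measure_equiv.
- apply: inL_sub (inL_marg Z Hp) => // v; rewrite mem_cat => /orP[/YX|/ZX] //.
- exact: inL_sub Hp.
- move=> s /=; suff : sat s (alleq L U Z) by tauto.
  by elim: Z {ZX} => //= w Z.
Qed.

End Measure.

Definition indic (p : form) (s : nat -> U) : R :=
  if excluded_middle_informative (sat s p) then 1 else 0.

Lemma indic_sat p s : sat s p -> indic p s = 1.
Proof. by rewrite /indic; case: excluded_middle_informative. Qed.

Lemma indic_unsat p s : ~ sat s p -> indic p s = 0.
Proof. by rewrite /indic; case: excluded_middle_informative. Qed.

Lemma indic01 p s : indic p s = 0 \/ indic p s = 1.
Proof. by rewrite /indic; case: excluded_middle_informative; [right|left]. Qed.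

Lemma indic_And p q s : indic (And p q) s = indic p s * indic q s.
Proof. by rewrite /indic; do 3 case: excluded_middle_informative => /=; try lra; tauto. Qed.

Lemma indic_Neg p s : indic (Neg p) s = 1 - indic p s.
Proof. by rewrite /indic; do 2 case: excluded_middle_informative => /=; try lra; tauto. Qed.

Lemma indic_equiv p q : fequiv p q -> indic p = indic q.
Proof.
move=> pq; apply: functional_extensionality => s; rewrite /indic.
by do 2 case: excluded_middle_informative => ? //=; have := pq s; tauto.
Qed.

Lemma bounded_indic p : bounded (indic p).
Proof. by exists 1 => s; case: (indic01 p s) => ->; rewrite ?Rabs_R0 ?Rabs_R1; lra. Qed.

(* A step function [sum_i c_i 1_{p_i}] is stored as the list of pairs [(c_i, p_i)]. *)
Definition step := seq (R * form).

Definition step_eval (l : step) (s : nat -> U) : R :=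
  foldr (fun e acc => e.1 * indic e.2 s + acc) 0 l.

Definition step_integral (m : form -> R) (l : step) : R :=
  foldr (fun e acc => e.1 * m e.2 + acc) 0 l.

Definition indic_count (l : step) (s : nat -> U) : R :=
  foldr (fun e acc => indic e.2 s + acc) 0 l.

Definition step_in X (B : U -> Prop) (l : step) := forall e, List.In e l -> inL X B e.2.

Definition scale_step (a : R) (l : step) : step := map (fun e => (a * e.1, e.2)) l.

Definition restr (m : form -> R) (th : form) : form -> R := fun p => m (And p th).

Lemma step_eval_cat l l' s : step_eval (l ++ l') s = step_eval l s + step_eval l' s.
Proof. by elim: l => [|e l IH] /=; rewrite ?IH; lra. Qed.

Lemma step_integral_cat m l l' :
  step_integral m (l ++ l') = step_integral m l + step_integral m l'.
Proof. by elim: l => [|e l IH] /=; rewrite ?IH; lra. Qed.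

Lemma indic_count_cat l l' s : indic_count (l ++ l') s = indic_count l s + indic_count l' s.
Proof. by elim: l => [|e l IH] /=; rewrite ?IH; lra. Qed.

Lemma step_eval_scale a l s : step_eval (scale_step a l) s = a * step_eval l s.
Proof. by elim: l => [|e l IH] /=; rewrite ?IH; lra. Qed.

Lemma step_integral_scale m a l : step_integral m (scale_step a l) = a * step_integral m l.
Proof. by elim: l => [|e l IH] /=; rewrite ?IH; lra. Qed.

Lemma step_in_cons X B e l : step_in X B (e :: l) <-> inL X B e.2 /\ step_in X B l.
Proof.
split=> [Hl|[He Hl] e' [<-|/Hl]] //.
by split=> [|e' He']; apply: Hl; [left|right].
Qed.

Lemma step_in_cat X B l l' : step_in X B l -> step_in X B l' -> step_in X B (l ++ l').
Proof. by move=> Hl Hl' e /(List.in_app_or l l') [/Hl|/Hl']. Qed.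

Lemma step_in_scale X B a l : step_in X B l -> step_in X B (scale_step a l).
Proof. by move=> Hl e /List.in_map_iff [e' [<- /Hl]]. Qed.

Lemma bounded_step_eval l : bounded (step_eval l).
Proof.
elim: l => [|e l IH]; first by exists 0 => s; rewrite /= Rabs_R0; lra.
exact/bounded_add/IH/bounded_scale/bounded_indic.
Qed.

Lemma step_eval_le l s M :
  (forall e, List.In e l -> sat s e.2 -> e.1 <= M) -> step_eval l s <= M * indic_count l s.
Proof.
elim: l => [|e l IH] /= le_M; first lra.
have := IH (fun e' He' => le_M e' (or_intror He')).
case: (classic (sat s e.2)) => [/[dup] /indic_sat -> /(le_M e (or_introl erefl))|/indic_unsat ->];
  lra.
Qed.

Lemma step_eval_const l s M :
  (forall e, List.In e l -> sat s e.2 -> e.1 = M) -> step_eval l s = M * indic_count l s.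
Proof.
elim: l => [|e l IH] /= eq_M; first lra.
rewrite (IH (fun e' He' => eq_M e' (or_intror He'))).
case: (classic (sat s e.2)) => [/[dup] /indic_sat -> /(eq_M e (or_introl erefl))|/indic_unsat ->];
  lra.
Qed.

Section StepIntegral.
Variables (X : seq nat) (B : U -> Prop) (m : form -> R).
Hypothesis m_meas : is_measure X B m.

Lemma step_integral_restr_split l th q : step_in X B l -> inL X B th -> inL X B q ->
  step_integral (restr m th) l =
  step_integral (restr m (And th q)) l + step_integral (restr m (And th (Neg q))) l.
Proof.
move=> + Hth Hq; elim: l => [|e l IH] /=; first lra.
move=> /step_in_cons [He /IH ->]; rewrite /restr (measure_split m_meas (q := q)); try solve_inL.
have assoc q' : inL X B q' -> m (And (And e.2 th) q') = m (And e.2 (And th q')).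
  by move=> Hq'; apply: (measure_equiv m_meas); try solve_inL; move=> s /=; tauto.
rewrite !assoc; try solve_inL.
lra.
Qed.

Lemma step_integral_restr_Top l :
  step_in X B l -> step_integral (restr m (Top L U)) l = step_integral m l.
Proof.
elim: l => [|e l IH] //= /step_in_cons [He /IH ->].
rewrite /restr (measure_equiv m_meas (q := e.2)) //; first solve_inL.
by move=> s /=; tauto.
Qed.

Lemma step_integral_restr_unsat l th : step_in X B l -> inL X B th -> (forall s, ~ sat s th) ->
  step_integral (restr m th) l = 0.
Proof.
move=> + Hth unsat; elim: l => [|e l IH] //= /step_in_cons [He /IH ->].
rewrite /restr (measure_unsat m_meas (p := And e.2 th)); [lra|solve_inL|].
by move=> s /= [_ /unsat].
Qed.

(* Stated inside an arbitrary region [th] so that the induction can split it along each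
   formula of [l]. *)
Lemma step_integral_restr_ge0 l th c : step_in X B l -> inL X B th ->
  (forall s, sat s th -> 0 <= c + step_eval l s) ->
  0 <= c * m th + step_integral (restr m th) l.
Proof.
elim: l th c => [|[c1 p1] l IH] th c /=.
  move=> _ Hth ge0; case: (classic (exists s, sat s th)) => [[s /ge0 /=]|unsat].
    by have := measure_ge0 m_meas Hth; nra.
  rewrite (measure_unsat m_meas Hth); first lra.
  by move=> s sth; apply: unsat; exists s.
move=> /step_in_cons /= [Hp1 Hl] Hth ge0.
have ge0_pos := IH (And th p1) (c + c1) Hl ltac:(solve_inL)
  (fun s '(conj sth sp1) => ltac:(have := ge0 s sth; rewrite indic_sat //; lra)).
have ge0_neg := IH (And th (Neg p1)) c Hl ltac:(solve_inL)
  (fun s '(conj sth np1) => ltac:(have := ge0 s sth; rewrite indic_unsat //; lra)).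
rewrite (step_integral_restr_split (q := p1)) // (measure_split m_meas (p := th) (q := p1)) //.
rewrite /restr (measure_equiv m_meas (p := And p1 th) (q := And th p1)); try solve_inL;
  last by move=> s /=; tauto.
rewrite /restr in ge0_pos ge0_neg; lra.
Qed.

Lemma step_integral_ge0 l c : step_in X B l ->
  (forall s, 0 <= c + step_eval l s) -> 0 <= c + step_integral m l.
Proof.
move=> Hl ge0; have := step_integral_restr_ge0 (th := Top L U) (c := c) Hl (inL_Top X B).
by rewrite step_integral_restr_Top // (measure_Top m_meas) Rmult_1_r; apply=> s _.
Qed.

Lemma step_integral_ext l l' : step_in X B l -> step_in X B l' ->
  (forall s, step_eval l s = step_eval l' s) -> step_integral m l = step_integral m l'.
Proof.
move=> Hl Hl' E.
have sub k k' : step_in X B k -> step_in X B k' -> (forall s, step_eval k s = step_eval k' s) ->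
    0 <= step_integral m k - step_integral m k'.
  move=> Hk Hk' Ek.
  have ge0 := step_integral_ge0 (c := 0) (step_in_cat Hk (step_in_scale (a := -1) Hk')).
  rewrite step_integral_cat step_integral_scale in ge0.
  by have := ge0 (fun s => ltac:(rewrite step_eval_cat step_eval_scale Ek; lra)); lra.
by have := sub _ _ Hl Hl' E; have := sub _ _ Hl' Hl (fun s => esym (E s)); lra.
Qed.

End StepIntegral.

Lemma step_eval_coincide X B l (s s' : nat -> U) : step_in X B l ->
  (forall v, v \in X -> s v = s' v) -> step_eval l s = step_eval l s'.
Proof.
move=> + ss'; elim: l => [|e l IH] //= /step_in_cons [[freeX _] /IH ->].
have /sat_coincide E : forall v, ffree v e.2 -> s v = s' v by move=> v /freeX /ss'.
by rewrite /indic; do 2 case: excluded_middle_informative => ? //=; tauto.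
Qed.

(* The cells of the partition generated by the formulas of [l], each with the value of [l]
   on it. *)
Fixpoint atoms (l : step) : step :=
  if l is (c, p) :: l' then
    [seq (e.1 + c, And p e.2) | e <- atoms l'] ++ [seq (e.1, And (Neg p) e.2) | e <- atoms l']
  else [:: (0, Top L U)].

Lemma step_in_atoms X B l : step_in X B l -> step_in X B (atoms l).
Proof.
elim: l => [|[c p] l IH] /=; first by move=> _ e [<-|].
move=> /step_in_cons [Hp /IH Hl] e /(List.in_app_or _ _ _) [] /List.in_map_iff [e' [<- /Hl He']];
  solve_inL.
Qed.

Lemma indic_count_map_And (f : R * form -> R) q l s :
  indic_count [seq (f e, And q e.2) | e <- l] s = indic q s * indic_count l s.
Proof. by elim: l => [|e l IH] /=; rewrite ?IH ?indic_And; lra. Qed.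

Lemma indic_count_atoms l s : indic_count (atoms l) s = 1.
Proof.
elim: l => [|[c p] l IH] /=; first by rewrite indic_sat //=; lra.
by rewrite indic_count_cat !indic_count_map_And IH indic_Neg; lra.
Qed.

Lemma atoms_value l s e : List.In e (atoms l) -> sat s e.2 -> e.1 = step_eval l s.
Proof.
elim: l e => [|[c p] l IH] e /=; first by move=> [<-|].
move=> /(List.in_app_or _ _ _) [] /List.in_map_iff [e' [<- /IH e'_val]] /= [sp /e'_val ->].
  by rewrite indic_sat //; lra.
by rewrite indic_unsat //; lra.
Qed.

Lemma step_eval_atoms l s : step_eval (atoms l) s = step_eval l s.
Proof.
rewrite (step_eval_const (M := step_eval l s)) ?indic_count_atoms; first lra.
by move=> e; apply: atoms_value.
Qed.

Lemma step_split_max (a : step) : a <> [::] ->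
  exists a1 e a2, a = a1 ++ e :: a2 /\ forall e', List.In e' a -> e'.1 <= e.1.
Proof.
elim: a => [//|e a IH] _; case: (classic (a = [::])) => [->|/IH [a1 [e1 [a2 [-> max_e1]]]]].
  by exists [::], e, [::]; split=> // e' [<-|]; lra.
case: (Rle_lt_dec e1.1 e.1) => [le_e1|lt_e].
  exists [::], e, (a1 ++ e1 :: a2); split=> // e' [<-|/max_e1]; lra.
exists (e :: a1), e1, a2; split=> // e' [<-|/max_e1]; lra.
Qed.

Definition global_measure (om : form -> R) := forall V (P : U -> Prop), is_measure V P om.

Lemma global_measure_of_graph H : positive_graph H ->
  (forall h, bounded h -> exists r, H h r) ->
  exists om, global_measure om /\ forall p, H (indic p) (om p).
Proof.
move=> H_pos H_total.
have /choice [om H_om] : forall p, exists r, H (indic p) r.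
  by move=> p; apply/H_total/bounded_indic.
exists om; split=> // V P; split; [|split; [|split]].
- move=> p q _ _ /indic_equiv pq.
  by have := H_om q; rewrite -pq; apply: (graph_functional H_pos (H_om p)).
- move=> p _; apply: (graph_ge_inf H_pos (H_om p)) => s.
  by case: (indic01 p s) => ->; lra.
- have := H_om (Top L U); rewrite (_ : indic _ = fun _ => 1); last first.
    by apply: functional_extensionality => s; rewrite indic_sat.
  move=> H_Top; apply: Rle_antisym.
    by apply: (graph_le_sup H_pos H_Top) => s; lra.
  by apply: (graph_ge_inf H_pos H_Top) => s; lra.
- move=> p q _ _ disj.
  have := graphD H_pos (H_om p) (H_om q).
  rewrite -(_ : indic (Or p q) = fun s => indic p s + indic q s).
    exact: (graph_functional H_pos (H_om (Or p q))).
  apply: functional_extensionality => s; have := disj s; rewrite /= /indic /Or.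
  by do 3 case: excluded_middle_informative => /= ?; try lra; tauto.
Qed.

Section Amalgamation.
Variables (V1 V2 : seq nat) (P1 P2 : U -> Prop) (m1 m2 : form -> R).
Hypothesis P12 : forall u, P1 u -> P2 u.
Hypothesis m1_meas : is_measure V1 P1 m1.
Hypothesis m2_meas : is_measure V2 P2 m2.
Hypothesis m12 : forall p, inL V1 P1 p -> inL V2 P2 p -> m1 p = m2 p.

(* Quantifying out the variables of [V1] not in [V2] lands in the common part of both algebras,
   which is where [m1] and [m2] can be compared. *)
Definition proj (p : form) := Exs [seq v <- V1 | v \notin V2] p.

Lemma proj_common p : inL V1 P1 p -> inL V1 P1 (proj p) /\ inL V2 P1 (proj p).
Proof.
move=> /(inL_Exs [seq v <- V1 | v \notin V2]) Hp.
split; apply: inL_sub Hp => // v; rewrite !mem_filter => /andP [+ vV1] //.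
by rewrite vV1 andbT negbK.
Qed.

Lemma sat_proj p s : sat s p -> sat s (proj p).
Proof. by move=> sp; apply/sat_Exs; exists s. Qed.

Lemma inL2 p : inL V2 P1 p -> inL V2 P2 p.
Proof. exact: inL_sub. Qed.

Lemma partition_cell_bound a e th c l2 :
  step_in V1 P1 a -> List.In e a -> (forall e', List.In e' a -> e'.1 <= e.1) ->
  inL V1 P1 th -> inL V2 P1 th -> step_in V2 P2 l2 ->
  (forall s, sat s th -> sat s e.2 -> e.1 + step_eval l2 s <= c) ->
  (forall s, sat s th -> indic_count a s = 1) ->
  step_integral (restr m1 (And th (proj e.2))) a + step_integral (restr m2 (And th (proj e.2))) l2
    <= c * m2 (And th (proj e.2)).
Proof.
move=> Ha Hae max_e Hth1 Hth2 Hl2 le_c part; set th' := And th (proj e.2).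
have [Hproj1 Hproj2] := proj_common (Ha _ Hae).
have Hth'1 : inL V1 P1 th' by solve_inL.
have Hth'2 : inL V2 P1 th' by solve_inL.
have cell1 : 0 <= e.1 * m1 th' + step_integral (restr m1 th') (scale_step (-1) a).
  apply: (step_integral_restr_ge0 m1_meas) => [|//|s [sth _]]; first exact: step_in_scale.
  rewrite step_eval_scale; have := step_eval_le (s := s) (fun e' He' _ => max_e e' He').
  by rewrite part //; lra.
have cell2 : 0 <= (c - e.1) * m2 th' + step_integral (restr m2 th') (scale_step (-1) l2).
  apply: (step_integral_restr_ge0 m2_meas) => [|/=|s [sth /sat_Exs [s' [s's se]]]].
  - exact: step_in_scale.
  - exact: inL2.
  have s's_V2 v : v \in V2 -> s' v = s v by move=> v2; apply: s's; rewrite mem_filter v2.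
  have s'th : sat s' th by apply/(sat_coincide (s' := s)) => // v /(proj1 Hth2) /s's_V2.
  have := le_c s' s'th se; rewrite step_eval_scale (step_eval_coincide Hl2 s's_V2); lra.
have m21 : m2 th' = m1 th' by symmetry; apply: m12; [|apply: inL2].
rewrite !step_integral_scale m21 in cell1 cell2 *; lra.
Qed.

Lemma partition_bound_nil th c l2 : inL V2 P1 th -> step_in V2 P2 l2 ->
  (forall s, sat s th -> indic_count [::] s = 1) ->
  step_integral (restr m1 th) [::] + step_integral (restr m2 th) l2 <= c * m2 th.
Proof.
move=> Hth Hl2 part; have unsat s : ~ sat s th by move=> /part /=; lra.
rewrite (step_integral_restr_unsat m2_meas) ?(measure_unsat m2_meas) //=; try exact: inL2.
lra.
Qed.

Lemma partition_bound n a th c l2 : (size a <= n)%nat ->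
  step_in V1 P1 a -> inL V1 P1 th -> inL V2 P1 th -> step_in V2 P2 l2 ->
  (forall s, sat s th -> forall e, List.In e a -> sat s e.2 -> e.1 + step_eval l2 s <= c) ->
  (forall s, sat s th -> indic_count a s = 1) ->
  step_integral (restr m1 th) a + step_integral (restr m2 th) l2 <= c * m2 th.
Proof.
elim: n a th l2 => [|n IH] a th l2 size_a Ha Hth1 Hth2 Hl2 le_c part.
  by case: a size_a Ha le_c part => // _ _ _; apply: partition_bound_nil.
case: (classic (a = [::])) => [a0|/step_split_max [a1 [e [a2 [a_split max_e]]]]].
  by move: part; rewrite a0; apply: partition_bound_nil.
have Hae : List.In e a by rewrite a_split; apply: List.in_or_app; right; left.
have [Hproj1 Hproj2] := proj_common (Ha _ Hae).
have in_a e' : List.In e' (a1 ++ a2) -> List.In e' a.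
  by rewrite a_split => /(List.in_app_or _ _ _) [] ?; apply: List.in_or_app; [left|right; right].
have rest := IH (a1 ++ a2) (And th (Neg (proj e.2))) l2.
have e_off : step_integral (restr m1 (And th (Neg (proj e.2)))) a =
             step_integral (restr m1 (And th (Neg (proj e.2)))) (a1 ++ a2).
  rewrite a_split !step_integral_cat /= /restr (measure_unsat m1_meas); first lra.
    by apply: inL_And; [apply: Ha|solve_inL].
  by move=> s /= [/sat_proj ? [_ ?]].
rewrite (step_integral_restr_split m1_meas (q := proj e.2)) // e_off.
rewrite (step_integral_restr_split m2_meas (l := l2) (q := proj e.2)) //; try exact: inL2.
rewrite (measure_split m2_meas (p := th) (q := proj e.2)); try exact: inL2.
have := partition_cell_bound Ha Hae max_e Hth1 Hth2 Hl2 (fun s sth => le_c s sth e Hae) part.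
have : step_integral (restr m1 (And th (Neg (proj e.2)))) (a1 ++ a2) +
       step_integral (restr m2 (And th (Neg (proj e.2)))) l2 <= c * m2 (And th (Neg (proj e.2))).
  apply: rest => //; try solve_inL.
  - by move: size_a; rewrite a_split !size_cat /= addnS.
  - by move=> e' /in_a /Ha.
  - by move=> s [sth _] e' /in_a; apply: le_c.
  - move=> s /= [sth nproj]; have := part s sth; rewrite a_split !indic_count_cat /=.
    by rewrite (indic_unsat (p := e.2)); [lra | move/sat_proj].
lra.
Qed.

Lemma amalgam_bound l1 l2 c : step_in V1 P1 l1 -> step_in V2 P2 l2 ->
  (forall s, step_eval l1 s + step_eval l2 s <= c) ->
  step_integral m1 l1 + step_integral m2 l2 <= c.
Proof.
move=> Hl1 Hl2 le_c; have Hatoms := step_in_atoms Hl1.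
rewrite (step_integral_ext m1_meas Hl1 Hatoms (fun s => esym (step_eval_atoms l1 s))).
have := partition_bound (leqnn (size (atoms l1))) (th := Top L U) (c := c) Hatoms
  (inL_Top _ _) (inL_Top _ _) Hl2.
rewrite (step_integral_restr_Top m1_meas) // (step_integral_restr_Top m2_meas) //.
rewrite (measure_Top m2_meas) Rmult_1_r; apply=> [s _ e He se|s _]; last exact: indic_count_atoms.
by rewrite (atoms_value He se).
Qed.

Definition amalgam_graph (g : (nat -> U) -> R) (r : R) := exists l1 l2,
  [/\ step_in V1 P1 l1, step_in V2 P2 l2, g = (fun s => step_eval l1 s + step_eval l2 s)
    & r = step_integral m1 l1 + step_integral m2 l2].

Lemma amalgam_graph_positive : positive_graph amalgam_graph.
Proof.
split.
- move=> _ _ _ _ [l1 [l2 [Hl1 Hl2 -> ->]]] [l1' [l2' [Hl1' Hl2' -> ->]]].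
  exists (l1 ++ l1'), (l2 ++ l2'); split; try exact: step_in_cat.
    by apply: functional_extensionality => s; rewrite !step_eval_cat; lra.
  by rewrite !step_integral_cat; lra.
- move=> a _ _ [l1 [l2 [Hl1 Hl2 -> ->]]].
  exists (scale_step a l1), (scale_step a l2); split; try exact: step_in_scale.
    by apply: functional_extensionality => s; rewrite !step_eval_scale; lra.
  by rewrite !step_integral_scale; lra.
- by move=> _ _ [l1 [l2 [_ _ -> _]]]; apply/bounded_add/bounded_step_eval/bounded_step_eval.
- by move=> _ _ c [l1 [l2 [Hl1 Hl2 -> ->]]]; apply: amalgam_bound.
Qed.

Lemma amalgamation : exists om, global_measure om /\ meq V1 P1 om m1 /\ meq V2 P2 om m2.
Proof.
have G0 : amalgam_graph (fun _ => 0) 0.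
  by apply: (graph0 amalgam_graph_positive); exists [::], [::].
have [H [H_pos [GH H_total]]] := positive_graph_total amalgam_graph_positive G0.
have [om [om_meas H_om]] := global_measure_of_graph H_pos H_total.
have indicE p : indic p = (fun s => step_eval [:: (1, p)] s + step_eval [::] s).
  by apply: functional_extensionality => s /=; lra.
exists om; split=> //; split=> p Hp; apply: (graph_functional H_pos (H_om p)); apply: GH.
- exists [:: (1, p)], [::]; split=> //=; [by move=> e [<-|] | by lra].
- exists [::], [:: (1, p)]; split=> //=; [by move=> e [<-|] | | by lra].
  by apply: functional_extensionality => s /=; lra.
Qed.

End Amalgamation.

Lemma inL_meet X Y (B B' : U -> Prop) (p : form) : inL X B p -> inL Y B' p -> inL Y B p.
Proof. by move=> [_ ?] [? _]. Qed.

Lemma meq_sub X X' (B B' : U -> Prop) m m' :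
  {subset X' <= X} -> (forall u, B' u -> B u) -> meq X B m m' -> meq X' B' m m'.
Proof. by move=> XX' BB' mm' p Hp; apply/mm'/(inL_sub XX' BB'). Qed.

Lemma meq_trans X (B : U -> Prop) m m' m'' : meq X B m m' -> meq X B m' m'' -> meq X B m m''.
Proof. by move=> mm' m'm'' p Hp; rewrite mm' ?m'm''. Qed.

Lemma meq_of_marg X Y (B : U -> Prop) lam mu :
  is_measure (X ++ Y) B lam -> meq X B (marg lam Y) mu -> meq X B lam mu.
Proof.
move=> lam_meas lam_mu p Hp.
by rewrite -(marg_eq lam_meas (sub_catl X Y) (sub_catr X Y) Hp) lam_mu.
Qed.

Lemma inL_middle X Y Z (A B : U -> Prop) (p : form) :
  (forall v, v \in X -> v \notin Z) ->
  inL (Y ++ Z) A p -> inL (X ++ Y) B p -> inL Y A p.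
Proof.
move=> disj_XZ [free_YZ pars] [free_XY _]; split=> // v fv.
move: (free_YZ v fv) (free_XY v fv) (disj_XZ v); rewrite !mem_cat.
by case/orP=> [->|vZ] //; case/orP=> [vX|->] //; rewrite vZ => /(_ vX).
Qed.

(* [geqE A X mu Y nu] unfolds to [exists lam, geqE_witness A X mu Y nu lam]. *)
Definition geqE_witness (A : U -> Prop) X (mu : form -> R) Y (nu : form -> R) lam :=
  is_measure (X ++ Y) A lam /\ meq X A (marg lam Y) mu /\
  forall om, is_measure (X ++ Y) (@setT_U L U) om -> meq (X ++ Y) A om lam ->
    meq X (@setT_U L U) (marg om Y) mu -> meq Y (@setT_U L U) (marg om X) nu.

Lemma geqE_global_marginal A X Y mu nu lam om : geqE_witness A X mu Y nu lam ->
  global_measure om -> meq (X ++ Y) A om lam -> meq X (@setT_U L U) om mu ->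
  meq Y (@setT_U L U) om nu.
Proof.
move=> [_ [_ determined]] om_glob om_lam om_mu p Hp.
have om_meas := om_glob (X ++ Y) (@setT_U L U).
rewrite -(marg_eq om_meas (sub_catr X Y) (sub_catl X Y) Hp); apply: determined => // q Hq.
by rewrite (marg_eq om_meas (sub_catl X Y) (sub_catr X Y) Hq); apply: om_mu.
Qed.

Lemma geqE_witness_extension A X Y mu nu lam :
  is_measure X (@setT_U L U) mu -> geqE_witness A X mu Y nu lam ->
  exists om, [/\ global_measure om, meq (X ++ Y) A om lam, meq X (@setT_U L U) om mu
    & meq Y (@setT_U L U) om nu].
Proof.
move=> mu_meas W; have [lam_meas [lam_mu _]] := W.
have [om [om_glob [om_lam om_mu]]] := amalgamation (fun _ _ => I) lam_meas mu_meas
  (fun p H1 H2 => meq_of_marg lam_meas lam_mu (inL_meet H1 H2)).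
by exists om; split=> //; apply: geqE_global_marginal W om_glob om_lam om_mu.
Qed.

End Formulas.

Theorem proposition3p12 (L : language) (U : structure L) (K : Type)
    (A : U -> Prop) (x y z : seq nat) (mu nu eta : formula L U -> R) :
  monster U K ->
  small K A ->
  uniq x -> uniq y -> uniq z ->
  (forall v, v \in x -> v \notin y) ->
  (forall v, v \in x -> v \notin z) ->
  (forall v, v \in y -> v \notin z) ->
  is_measure x (@setT_U L U) mu ->
  is_measure y (@setT_U L U) nu ->
  is_measure z (@setT_U L U) eta ->
  geqE A x mu y nu ->
  geqE A y nu z eta ->
  geqE A x mu z eta.
Proof.
(* Amalgamation needs no saturation: of the side conditions only [x] and [z] disjoint is used. *)
move=> _ _ _ _ _ _ disj_xz _ mu_meas _ _ [lam1 W1] [lam2 W2].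
have [om1 [om1_glob om1_lam1 om1_mu om1_nu]] := geqE_witness_extension mu_meas W1.
have [lam2_meas [lam2_nu _]] := W2.
have lam2_om1 p : inL (y ++ z) A p -> inL (x ++ y) (@setT_U L U) p -> lam2 p = om1 p.
  move=> H1 H2; have Hy := inL_middle disj_xz H1 H2.
  by rewrite (meq_of_marg lam2_meas lam2_nu Hy) om1_nu //; apply: inL_sub Hy.
have [om2 [om2_glob [om2_lam2 om2_om1]]] :=
  amalgamation (fun _ _ => I) lam2_meas (om1_glob _ _) lam2_om1.
exists om2; split; first exact: om2_glob.
split=> [p Hp|om om_meas om_om2 om_mu].
  rewrite (marg_eq (om2_glob (x ++ z) A) (sub_catl x z) (sub_catr x z) Hp).
  by rewrite om2_om1 ?om1_mu //; apply: inL_sub Hp => //; apply: sub_catl.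
have [om3 [om3_glob [om3_om2 om3_om]]] := amalgamation (fun _ _ => I) (om2_glob (x ++ y ++ z) A)
  om_meas (fun p H1 H2 => esym (om_om2 _ (inL_meet H1 H2))).
have om3_nu := geqE_global_marginal W1 om3_glob
  (meq_trans (meq_sub (sub_catl_catA x y z) (fun _ h => h) om3_om2)
     (meq_trans (meq_sub (fun _ h => h) (fun _ _ => I) om2_om1) om1_lam1))
  (meq_trans (meq_sub (sub_catl x z) (fun _ h => h) om3_om) (meq_of_marg om_meas om_mu)).
have om3_eta := geqE_global_marginal W2 om3_glob
  (meq_trans (meq_sub (sub_catr x (y ++ z)) (fun _ h => h) om3_om2) om2_lam2) om3_nu.
move=> p Hp; rewrite (marg_eq om_meas (sub_catr x z) (sub_catl x z) Hp).
by rewrite -om3_om ?om3_eta //; apply: inL_sub Hp => //; apply: sub_catr.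
Qed.
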